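(* With $H,\boldsymbol{P}^h,\boldsymbol{A}^h,\boldsymbol{W}_V^h,\boldsymbol{W}_O^h,\alpha,\sigma_1,\sigma_2$ and $\mathrm{MSA}$ as follows — $\boldsymbol{A}^h=\mathrm{softmax}(\boldsymbol{P}^h)$ for $h=1,\dots,H$, $\alpha=\max_h\max_{i,j}\lvert\boldsymbol{P}^h_{ij}\rvert$, $\sigma_1=\max_h\lVert\boldsymbol{W}_V^h\rVert_2$, $\sigma_2=\max_h\lVert\boldsymbol{W}_O^h\rVert_2$, $\mathrm{MSA}(\boldsymbol{X})=\sum_{h=1}^H\boldsymbol{A}^h\boldsymbol{X}\boldsymbol{W}_V^h\boldsymbol{W}_O^h$ — let $\boldsymbol{X}\in\mathbb{R}^{n\times d}$ and $\boldsymbol{X}'=\mathrm{MSA}(\boldsymbol{X})+\boldsymbol{X}$. Then $$\lVert\mathrm{HC}[\boldsymbol{X}']\rVert_F\le\Big(1+\sigma_1\sigma_2H\sqrt{\tfrac{ne^{2\alpha}}{e^{2\alpha}+n-1}}\Big)\lVert\mathrm{HC}[\boldsymbol{X}]\rVert_F.$$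
   Context: $\boldsymbol{P}^h\in\mathbb{R}^{n\times n}$, $\boldsymbol{W}_V^h,\boldsymbol{W}_O^h\in\mathbb{R}^{d\times d}$. $\mathrm{softmax}$ is applied row-wise: $\mathrm{softmax}(\boldsymbol{P})_{ij}=e^{\boldsymbol{P}_{ij}}/\sum_t e^{\boldsymbol{P}_{it}}$. $\mathrm{HC}[\boldsymbol{X}]=(\boldsymbol{I}-\frac1n\boldsymbol{1}\boldsymbol{1}^T)\boldsymbol{X}$ with $\boldsymbol{1}$ the all-ones vector. $\lVert\cdot\rVert_F$ Frobenius norm, $\lVert\cdot\rVert_2$ spectral norm. *)

From HB Require Import structures.
From mathcomp Require Import all_boot all_order all_algebra.
From mathcomp Require Import all_classical all_reals all_analysis.
Set Implicit Arguments. Unset Strict Implicit. Unset Printing Implicit Defensive.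
Import Order.TTheory GRing.Theory Num.Theory.
Local Open Scope ring_scope.
Local Open Scope classical_set_scope.

Definition frob {R : realType} {m k : nat} (A : 'M[R]_(m, k)) : R :=
  Num.sqrt (\sum_(i < m) \sum_(j < k) A i j ^+ 2).

Definition specnorm {R : realType} {m k : nat} (W : 'M[R]_(m, k)) : R :=
  sup [set frob (W *m v) | v in [set v : 'cV[R]_k | frob v <= 1]].

Definition softmax {R : realType} {n : nat} (P : 'M[R]_n) : 'M[R]_n :=
  \matrix_(i, j) (expR (P i j) / \sum_(t < n) expR (P i t)).

Definition HC {R : realType} {n d : nat} (X : 'M[R]_(n, d)) : 'M[R]_(n, d) :=
  (1%:M - (n%:R)^-1 *: const_mx 1) *m X.

Definition MSA {R : realType} {H n d : nat} (P : 'I_H -> 'M[R]_n)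
  (WV WO : 'I_H -> 'M[R]_d) (X : 'M[R]_(n, d)) : 'M[R]_(n, d) :=
  \sum_(h < H) (softmax (P h) *m X *m WV h *m WO h).

Definition alpha_of {R : realType} {H n : nat} (P : 'I_H -> 'M[R]_n) : R :=
  \big[Num.max/0]_(h < H) \big[Num.max/0]_(i < n) \big[Num.max/0]_(j < n) `|P h i j|.

Definition maxspec {R : realType} {H d : nat} (W : 'I_H -> 'M[R]_d) : R :=
  \big[Num.max/0]_(h < H) specnorm (W h).

From HB Require Import structures.
From mathcomp Require Import all_boot all_order all_algebra.
From mathcomp Require Import all_classical all_reals all_analysis.
From mathcomp Require Import ring lra.
Import Order.TTheory GRing.Theory Num.Theory.
Set Implicit Arguments. Unset Strict Implicit. Unset Printing Implicit Defensive.
Local Open Scope ring_scope.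

(* Centering is linear, and for a row-stochastic A the constant part of X is
   reproduced by A and then killed, so HC[A X] = HC[A HC[X]]; moreover HC is a
   contraction for the Frobenius norm.  Each head therefore contributes at
   most sigma1 sigma2 ||A^h||_2 ||HC[X]||_F.  For a row-stochastic A with
   entries at most e, Jensen's inequality on each row gives
   ||A v||^2 <= sum_j (sum_i A_ij) v_j^2 <= n e ||v||^2, and every softmax
   entry is at most e^(2 alpha) / (e^(2 alpha) + n - 1) because its
   denominator exceeds its numerator by at least (n - 1) e^(-alpha). *)

Section FiniteSums.
Variables (R : realFieldType) (I : finType).
Implicit Types x y : I -> R.

Lemma sum_sqr_ge0 x : 0 <= \sum_i x i ^+ 2.
Proof. by apply: sumr_ge0 => i _; apply: sqr_ge0. Qed.

Lemma sum_sqr_eq0 x : \sum_i x i ^+ 2 = 0 -> forall i, x i = 0.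
Proof.
move=> /psumr_eq0P x0 i; apply/eqP; rewrite -sqrf_eq0.
by apply/eqP/x0 => // j _; apply: sqr_ge0.
Qed.

Lemma cauchy_schwarz x y :
  (\sum_i x i * y i) ^+ 2 <= (\sum_i x i ^+ 2) * (\sum_i y i ^+ 2).
Proof.
set a := \sum_i x i ^+ 2; set b := \sum_i y i ^+ 2; set c := \sum_i x i * y i.
have [b0|b_neq0] := eqVneq b 0.
  have c0 : c = 0 by rewrite /c big1 // => i _; rewrite (sum_sqr_eq0 b0) mulr0.
  by rewrite b0 c0 expr0n mulr0.
have b_gt0 : 0 < b by rewrite lt0r b_neq0 sum_sqr_ge0.
have expand (u v : R) :
    \sum_i (u * x i - v * y i) ^+ 2 = u ^+ 2 * a - 2 * u * v * c + v ^+ 2 * b.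
  by rewrite /a /b /c !mulr_sumr -sumrN -!big_split /=; apply: eq_bigr => i _; ring.
have : 0 <= \sum_i (b * x i - c * y i) ^+ 2 by apply: sum_sqr_ge0.
have -> : \sum_i (b * x i - c * y i) ^+ 2 = b * (a * b - c ^+ 2) by rewrite expand; ring.
by rewrite pmulr_rge0 // subr_ge0.
Qed.

Lemma sum_sqr_centered_le x :
  \sum_i (x i - #|I|%:R^-1 * \sum_j x j) ^+ 2 <= \sum_i x i ^+ 2.
Proof.
set m := #|I|%:R^-1 * _.
have sum_x : \sum_j x j = #|I|%:R * m.
  have [I0|I_gt0] := posnP #|I|.
    by rewrite /m I0 mul0r big_pred0 // => j; apply: card0_eq I0 j.
  by rewrite /m mulrA divff ?mul1r // pnatr_eq0 -lt0n.
have -> : \sum_i (x i - m) ^+ 2 = \sum_i x i ^+ 2 - #|I|%:R * m ^+ 2.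
  have -> : \sum_i (x i - m) ^+ 2 = \sum_i x i ^+ 2 - 2 * m * \sum_j x j + \sum_(i : I) m ^+ 2.
    by rewrite mulr_sumr -sumrN -!big_split /=; apply: eq_bigr => i _; ring.
  by rewrite sum_x sumr_const -mulr_natl; ring.
by rewrite lerBlDr lerDl mulr_ge0 ?sqr_ge0.
Qed.

End FiniteSums.

Section WeightedSums.
Variables (R : rcfType) (I : finType).

Lemma sum_mul_le_sqrt (x y : I -> R) :
  \sum_i x i * y i <= Num.sqrt (\sum_i x i ^+ 2) * Num.sqrt (\sum_i y i ^+ 2).
Proof.
rewrite -sqrtrM ?sum_sqr_ge0 // (le_trans (ler_norm _)) //.
by rewrite -sqrtr_sqr ler_sqrt ?mulr_ge0 ?sum_sqr_ge0 ?cauchy_schwarz.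
Qed.

Lemma sqr_wsum_le (a x : I -> R) : (forall i, 0 <= a i) ->
  (\sum_i a i * x i) ^+ 2 <= (\sum_i a i) * \sum_i a i * x i ^+ 2.
Proof.
move=> a_ge0.
have -> : \sum_i a i * x i = \sum_i Num.sqrt (a i) * (Num.sqrt (a i) * x i).
  by apply: eq_bigr => i _; rewrite mulrA -expr2 sqr_sqrtr.
have sqr_sqrt_a i : a i = Num.sqrt (a i) ^+ 2 by rewrite sqr_sqrtr.
rewrite (eq_bigr _ (fun i _ => sqr_sqrt_a i)).
rewrite [X in _ <= _ * X](eq_bigr (fun i => (Num.sqrt (a i) * x i) ^+ 2)).
  exact: cauchy_schwarz.
by move=> i _; rewrite exprMn -sqr_sqrt_a.
Qed.

End WeightedSums.

Section Frobenius.
Variable R : realType.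

Lemma frob_ge0 m k (A : 'M[R]_(m, k)) : 0 <= frob A.
Proof. exact: sqrtr_ge0. Qed.

Lemma frob_sqr m k (A : 'M[R]_(m, k)) : frob A ^+ 2 = \sum_i \sum_j A i j ^+ 2.
Proof. by rewrite sqr_sqrtr // sumr_ge0 // => i _; apply: sum_sqr_ge0. Qed.

Lemma frob_pair m k (A : 'M[R]_(m, k)) :
  frob A = Num.sqrt (\sum_(p : 'I_m * 'I_k) A p.1 p.2 ^+ 2).
Proof. by rewrite /frob pair_bigA. Qed.

Lemma frob_eq0 m k (A : 'M[R]_(m, k)) : frob A = 0 -> A = 0.
Proof.
move=> /eqP; rewrite frob_pair sqrtr_eq0 le_eqVlt ltNge sum_sqr_ge0 orbF.
by move=> /eqP/sum_sqr_eq0 A0; apply/matrixP => i j; rewrite mxE (A0 (i, j)).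
Qed.

Lemma frob0 m k : frob (0 : 'M[R]_(m, k)) = 0.
Proof. by rewrite frob_pair big1 ?sqrtr0 // => p _; rewrite mxE expr0n. Qed.

Lemma frobZ m k (a : R) (A : 'M[R]_(m, k)) : frob (a *: A) = `|a| * frob A.
Proof.
rewrite !frob_pair -sqrtr_sqr -sqrtrM ?sqr_ge0 // mulr_sumr.
by congr Num.sqrt; apply: eq_bigr => p _; rewrite mxE exprMn.
Qed.

Lemma frob_trmx m k (A : 'M[R]_(m, k)) : frob A^T = frob A.
Proof.
rewrite /frob exchange_big; congr Num.sqrt.
by apply: eq_bigr => i _; apply: eq_bigr => j _; rewrite mxE.
Qed.

Definition mxdot m k (A B : 'M[R]_(m, k)) := \sum_i \sum_j A i j * B i j.

Lemma frob_sqr_mxdot m k (A : 'M[R]_(m, k)) : frob A ^+ 2 = mxdot A A.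
Proof. by rewrite frob_sqr; apply: eq_bigr => i _; apply: eq_bigr => j _; rewrite expr2. Qed.

Lemma mxdot_cV n (a b : 'cV[R]_n) : mxdot a b = (a^T *m b) 0 0.
Proof. by rewrite mxE; apply: eq_bigr => i _; rewrite big_ord1 mxE. Qed.

Lemma mxdot_le_frob m k (A B : 'M[R]_(m, k)) : mxdot A B <= frob A * frob B.
Proof. by rewrite /mxdot pair_bigA !frob_pair; apply: sum_mul_le_sqrt. Qed.

Lemma frobD m k (A B : 'M[R]_(m, k)) : frob (A + B) <= frob A + frob B.
Proof.
rewrite -ler_sqr ?nnegrE ?addr_ge0 ?frob_ge0 //.
have -> : frob (A + B) ^+ 2 = frob A ^+ 2 + frob B ^+ 2 + 2 * mxdot A B.
  rewrite !frob_sqr /mxdot mulr_sumr -!big_split /=; apply: eq_bigr => i _.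
  by rewrite mulr_sumr -!big_split /=; apply: eq_bigr => j _; rewrite mxE; ring.
rewrite -subr_ge0.
have -> : (frob A + frob B) ^+ 2 - (frob A ^+ 2 + frob B ^+ 2 + 2 * mxdot A B) =
    2 * (frob A * frob B - mxdot A B) by ring.
by rewrite mulr_ge0 // subr_ge0 mxdot_le_frob.
Qed.

Lemma frob_sum m k (I : finType) (F : I -> 'M[R]_(m, k)) :
  frob (\sum_i F i) <= \sum_i frob (F i).
Proof.
apply: (big_ind2 (fun A c => frob A <= c)) => //; first by rewrite frob0.
by move=> A1 c1 A2 c2 le1 le2; rewrite (le_trans (frobD _ _)) ?lerD.
Qed.

Lemma frob_sqr_cV n (v : 'cV[R]_n) : frob v ^+ 2 = \sum_i v i 0 ^+ 2.
Proof. by rewrite frob_sqr; apply: eq_bigr => i _; rewrite big_ord1. Qed.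

Lemma frob_sqr_cols m k (A : 'M[R]_(m, k)) :
  frob A ^+ 2 = \sum_j frob (col j A) ^+ 2.
Proof.
rewrite frob_sqr exchange_big; apply: eq_bigr => j _.
by rewrite frob_sqr_cV; apply: eq_bigr => i _; rewrite mxE.
Qed.

Lemma frob_mulmx_le_cols m k p (B : 'M[R]_(m, k)) (c : R) : 0 <= c ->
  (forall v : 'cV[R]_k, frob (B *m v) <= c * frob v) ->
  forall A : 'M[R]_(k, p), frob (B *m A) <= c * frob A.
Proof.
move=> c_ge0 Bv A; rewrite -ler_sqr ?nnegrE ?mulr_ge0 ?frob_ge0 //.
rewrite exprMn !frob_sqr_cols mulr_sumr; apply: ler_sum => j _.
by rewrite colE -mulmxA -colE -exprMn ler_sqr ?nnegrE ?mulr_ge0 ?frob_ge0 ?Bv.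
Qed.

Lemma frob_mulmx_le m k p (A : 'M[R]_(m, k)) (B : 'M[R]_(k, p)) :
  frob (A *m B) <= frob A * frob B.
Proof.
apply: frob_mulmx_le_cols; rewrite ?frob_ge0 // => v.
rewrite -ler_sqr ?nnegrE ?mulr_ge0 ?frob_ge0 // exprMn !frob_sqr_cV frob_sqr.
rewrite mulr_suml; apply: ler_sum => i _; rewrite mxE.
exact: cauchy_schwarz.
Qed.

End Frobenius.

Section SpectralNorm.
Variable R : realType.

Variables m k : nat.
Implicit Types (W : 'M[R]_(m, k)) (v : 'cV[R]_k).

Lemma specnorm_has_sup W :
  has_sup [set frob (W *m v) | v in [set v : 'cV[R]_k | frob v <= 1]].
Proof.
split; first by exists (frob (W *m (0 : 'cV[R]_k))), 0; rewrite /= ?frob0 ?ler01.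
exists (frob W) => _ [v /= v_le1 <-].
by rewrite (le_trans (frob_mulmx_le _ _)) // ler_piMr ?frob_ge0.
Qed.

Lemma specnorm_ub W v : frob v <= 1 -> frob (W *m v) <= specnorm W.
Proof. by move=> v_le1; apply: sup_upper_bound (specnorm_has_sup W) _ _; exists v. Qed.

Lemma specnorm_ge0 W : 0 <= specnorm W.
Proof. by rewrite -(@frob0 R m 1) -(mulmx0 _ W) specnorm_ub ?frob0. Qed.

Lemma frob_mulmx_specnorm W v : frob (W *m v) <= specnorm W * frob v.
Proof.
have [/frob_eq0 ->|v_neq0] := eqVneq (frob v) 0; first by rewrite mulmx0 !frob0 mulr0.
have v_gt0 : 0 < frob v by rewrite lt0r v_neq0 frob_ge0.
rewrite -ler_pdivrMr // mulrC.
have := @specnorm_ub W ((frob v)^-1 *: v).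
by rewrite -scalemxAr !frobZ ger0_norm ?invr_ge0 ?frob_ge0 // mulVf // => /(_ (lexx 1)).
Qed.

Lemma frob_trmx_mulmx_specnorm W (u : 'cV[R]_m) : frob (W^T *m u) <= specnorm W * frob u.
Proof.
set y := W^T *m u.
have [y0|y_neq0] := eqVneq (frob y) 0; first by rewrite y0 mulr_ge0 ?specnorm_ge0 ?frob_ge0.
have y_gt0 : 0 < frob y by rewrite lt0r y_neq0 frob_ge0.
have : frob y ^+ 2 <= frob y * (specnorm W * frob u).
  have -> : frob y ^+ 2 = mxdot u (W *m y).
    by rewrite frob_sqr_mxdot !mxdot_cV /y trmx_mul trmxK !mulmxA.
  rewrite (le_trans (mxdot_le_frob _ _)) //.
  have -> : frob y * (specnorm W * frob u) = frob u * (specnorm W * frob y) by ring.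
  by rewrite ler_wpM2l ?frob_ge0 ?frob_mulmx_specnorm.
by rewrite expr2 ler_pM2l.
Qed.

Lemma frob_mulmx_specnormr p (A : 'M[R]_(p, m)) W : frob (A *m W) <= frob A * specnorm W.
Proof.
rewrite -frob_trmx trmx_mul -(frob_trmx A) mulrC.
by apply: frob_mulmx_le_cols; [exact: specnorm_ge0 | exact: frob_trmx_mulmx_specnorm].
Qed.

End SpectralNorm.

Section Centering.
Variable R : realType.

Lemma HC_cV n (v : 'cV[R]_n) i : HC v i 0 = v i 0 - n%:R^-1 * \sum_k v k 0.
Proof.
rewrite /HC mulmxBl mul1mx -scalemxAl !mxE; congr (_ - _ * _).
by apply: eq_bigr => k _; rewrite mxE mul1r.
Qed.

Lemma frob_HC_le n d (Y : 'M[R]_(n, d)) : frob (HC Y) <= frob Y.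
Proof.
rewrite -[frob Y]mul1r; apply: frob_mulmx_le_cols Y => // v.
rewrite mul1r -ler_sqr ?nnegrE ?frob_ge0 // !frob_sqr_cV.
under eq_bigr do rewrite HC_cV.
by have := sum_sqr_centered_le (fun i : 'I_n => v i 0); rewrite card_ord.
Qed.

Lemma HC_mulmxr n d p (Y : 'M[R]_(n, d)) (W : 'M[R]_(d, p)) : HC (Y *m W) = HC Y *m W.
Proof. exact: mulmxA. Qed.

End Centering.

Section RowStochastic.
Variables (R : realType) (n : nat) (A : 'M[R]_n).
Hypotheses (A_ge0 : forall i j, 0 <= A i j) (A_row_sum : forall i, \sum_j A i j = 1).

Lemma frob_stochastic_mulmx (e : R) : (forall i j, A i j <= e) ->
  forall p (B : 'M[R]_(n, p)), frob (A *m B) <= Num.sqrt (n%:R * e) * frob B.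
Proof.
move=> A_le_e p B; apply: frob_mulmx_le_cols B; first exact: sqrtr_ge0.
have ne_ge0 : 0 <= n%:R * e.
  case: n A A_ge0 A_le_e => [|n'] A' A'_ge0 A'_le_e; first by rewrite mul0r.
  by rewrite mulr_ge0 // (le_trans (A'_ge0 0 0)).
move=> v; rewrite -ler_sqr ?nnegrE ?mulr_ge0 ?sqrtr_ge0 ?frob_ge0 //.
rewrite exprMn (sqr_sqrtr ne_ge0) !frob_sqr_cV.
apply: (@le_trans _ _ (\sum_i \sum_j A i j * v j 0 ^+ 2)).
  apply: ler_sum => i _; rewrite mxE -[X in _ <= X]mul1r -(A_row_sum i).
  exact: sqr_wsum_le.
rewrite exchange_big mulr_sumr; apply: ler_sum => j _.
rewrite -mulr_suml ler_wpM2r ?sqr_ge0 //.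
by rewrite (le_trans (ler_sum _ (fun i _ => A_le_e i j))) // sumr_const card_ord mulr_natl.
Qed.

Lemma HC_stochastic_mulmx d (X : 'M[R]_(n, d)) : HC (A *m X) = HC (A *m HC X).
Proof.
case: n A A_row_sum X => [|n'] A' A'_row_sum X; first by rewrite !flatmx0.
set J := const_mx 1 : 'M[R]_n'.+1.
have AJ : A' *m J = J.
  apply/matrixP => i j; rewrite !mxE -[RHS](A'_row_sum i).
  by apply: eq_bigr => k _; rewrite mxE mulr1.
have HCJ : HC J = 0.
  rewrite /HC mulmxBl mul1mx -scalemxAl.
  have -> : J *m J = n'.+1%:R *: J.
    apply/matrixP => i j; rewrite !mxE (eq_bigr (fun _ => 1)) => [|k _]; last by rewrite !mxE mulr1.
    by rewrite sumr_const card_ord mulr1.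
  by rewrite scalerA mulVf ?pnatr_eq0 // scale1r subrr.
have -> : HC X = X - n'.+1%:R^-1 *: (J *m X) by rewrite /HC mulmxBl mul1mx -scalemxAl.
rewrite mulmxBr -scalemxAr mulmxA AJ.
by rewrite /HC mulmxBr -scalemxAr mulmxA -/(HC J) HCJ mul0mx scaler0 subr0.
Qed.

Lemma frob_HC_stochastic_mulmx (e : R) : (forall i j, A i j <= e) ->
  forall d (X : 'M[R]_(n, d)), frob (HC (A *m X)) <= Num.sqrt (n%:R * e) * frob (HC X).
Proof.
move=> A_le_e d X; rewrite HC_stochastic_mulmx.
exact: le_trans (frob_HC_le _) (frob_stochastic_mulmx A_le_e _).
Qed.

End RowStochastic.

Section Softmax.
Variables (R : realType) (n : nat) (P : 'M[R]_n).

Lemma softmax_ge0 i j : 0 <= softmax P i j.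
Proof. by rewrite mxE divr_ge0 ?expR_ge0 // sumr_ge0 // => t _; apply: expR_ge0. Qed.

Lemma softmax_row_sum i : \sum_j softmax P i j = 1.
Proof.
under eq_bigr do rewrite mxE.
rewrite -mulr_suml divff // gt_eqF // (bigD1 i) //= ltr_pwDl ?expR_gt0 //.
by rewrite sumr_ge0 // => t _; apply: expR_ge0.
Qed.

Lemma softmax_le (a : R) : (forall i j, `|P i j| <= a) ->
  forall i j, softmax P i j <= expR (2 * a) / (expR (2 * a) + n%:R - 1).
Proof.
move=> P_le_a i j.
have n_ge1 : 1 <= n%:R :> R by rewrite ler1n; case: n P P_le_a i j => [|n'] ? ? [].
set x := expR (P i j); set c := (n%:R - 1) * expR (- a).
have c_ge0 : 0 <= c by rewrite mulr_ge0 ?subr_ge0 ?expR_ge0.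
have x_le : x <= expR a by rewrite ler_expR; move: (P_le_a i j); rewrite ler_norml => /andP[].
have sum_ge : x + c <= \sum_t expR (P i t).
  have -> : c = \sum_(t < n | t != j) expR (- a).
    have sum_const : expR (- a) *+ n = expR (- a) + \sum_(t < n | t != j) expR (- a).
      by rewrite -[in LHS](card_ord n) -sumr_const (bigD1 j).
    by rewrite /c mulrBl mul1r mulr_natl sum_const; ring.
  rewrite [X in _ <= X](bigD1 j) //= -/x lerD2l; apply: ler_sum => t _; rewrite ler_expR.
  by move: (P_le_a i t); rewrite ler_norml => /andP[].
have expRa : expR (2 * a) = expR a * expR a by rewrite -expRD; congr expR; ring.
have -> : expR (2 * a) / (expR (2 * a) + n%:R - 1) = expR a / (expR a + c).
  rewrite /c expRN expRa; field.
  by rewrite -expRa lt0r_neq0 ?expR_gt0 //= lt0r_neq0 // ltr_pwDl ?expR_gt0 ?subr_ge0.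
have x_gt0 : 0 < x by apply: expR_gt0.
have xc_gt0 : 0 < x + c by rewrite ltr_pwDl.
rewrite /softmax mxE -/x (@le_trans _ _ (x / (x + c))) //.
  by rewrite ler_pM2l // lef_pV2 ?posrE // (lt_le_trans xc_gt0).
rewrite ler_pdivlMr ?ltr_pwDl ?expR_gt0 // mulrAC ler_pdivrMr //.
nra.
Qed.

End Softmax.

Lemma abs_le_alpha_of (R : realType) H n (P : 'I_H -> 'M[R]_n) h i j :
  `|P h i j| <= alpha_of P.
Proof.
rewrite (le_trans _ (le_bigmax _ _ h)) // (le_trans _ (le_bigmax _ _ i)) //.
exact: (le_bigmax _ (fun j => `|P h i j|) j).
Qed.

Lemma specnorm_le_maxspec (R : realType) H d (W : 'I_H -> 'M[R]_d) h :
  specnorm (W h) <= maxspec W.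
Proof. exact: (le_bigmax _ (fun h => specnorm (W h)) h). Qed.

Theorem proposition5 (R : realType) (H n d : nat) (P : 'I_H -> 'M[R]_n)
  (WV WO : 'I_H -> 'M[R]_d) (X : 'M[R]_(n, d)) :
  let alpha := alpha_of P in
  let sigma1 := maxspec WV in
  let sigma2 := maxspec WO in
  let X' := MSA P WV WO X + X in
  frob (HC X') <=
    (1 + sigma1 * sigma2 * H%:R *
       Num.sqrt (n%:R * expR (2 * alpha) / (expR (2 * alpha) + n%:R - 1)))
    * frob (HC X).
Proof.
cbv zeta; set sigma1 := maxspec WV; set sigma2 := maxspec WO.
set s := n%:R * _ / _.
set c := sigma1 * sigma2 * Num.sqrt s * frob (HC X).
have head h : frob (HC (softmax (P h) *m X *m WV h *m WO h)) <= c.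
  rewrite 2!HC_mulmxr (le_trans (frob_mulmx_specnormr _ _)) //.
  have -> : c = sigma1 * (Num.sqrt s * frob (HC X)) * sigma2 by rewrite /c; ring.
  rewrite ler_pM ?frob_ge0 ?specnorm_ge0 ?specnorm_le_maxspec //.
  rewrite (le_trans (frob_mulmx_specnormr _ _)) // mulrC.
  rewrite ler_pM ?frob_ge0 ?specnorm_ge0 ?specnorm_le_maxspec //.
  rewrite /s -mulrA frob_HC_stochastic_mulmx //; [exact: softmax_ge0 | exact: softmax_row_sum |].
  by apply: softmax_le => i j; apply: abs_le_alpha_of.
have -> : HC (MSA P WV WO X + X) = \sum_h HC (softmax (P h) *m X *m WV h *m WO h) + HC X.
  by rewrite /HC mulmxDr mulmx_sumr.
rewrite (le_trans (frobD _ _)) // mulrDl mul1r [X in _ <= X]addrC lerD2r.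
rewrite (le_trans (frob_sum _)) // (le_trans (ler_sum _ (fun h _ => head h))) //.
rewrite sumr_const card_ord.
have -> : c *+ H = sigma1 * sigma2 * H%:R * Num.sqrt s * frob (HC X) by rewrite /c -mulr_natr; ring.
by [].
Qed.
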